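(* Let $(E,A)$ satisfy the standing assumptions below and set $p:=p_{\mathrm{res}}^{(E,A)}+1$. If $E(X_{\operatorname{ran}})$ is closed and $X_{\operatorname{ran}} \cap \ker R_r(\mu)^p = \{0\}$, then $E\colon X_{\operatorname{ran}} \to Z_{\operatorname{ran}}$ is boundedly invertible.
   Context: Standing assumptions: $X$, $Z$ complex Banach spaces; $E\in L(X,Z)$; $A\colon\mathrm{dom}(A)\subseteq X\to Z$ closed and densely defined; $(E,A)$ has a complex resolvent index $p_{\mathrm{res}}^{(E,A)}$, i.e.~the smallest $n\in\mathbb N_0$ such that for some $\omega\in\mathbb R$, $C>0$, $\mathbb C_{\operatorname{Re}>\omega}\subseteq\rho(E,A)$ and $\Vert(\lambda E-A)^{-1}\Vert\le C|\lambda|^{n-1}$ for all $\lambda\in\mathbb C_{\operatorname{Re}>\omega}$. $\mu\in\rho(E,A)$, $R_r(\lambda)=(\lambda E-A)^{-1}E$, $R_l(\lambda)=E(\lambda E-A)^{-1}$, $X_{\operatorname{ran}}=\overline{\operatorname{ran}R_r(\mu)^p}$, $Z_{\operatorname{ran}}=\overline{\operatorname{ran}R_l(\mu)^p}$ (closures of ranges). *)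

From HB Require Import structures.
From mathcomp Require Import all_boot all_order all_algebra.
From mathcomp Require Import all_classical all_reals all_analysis.
From mathcomp Require Import complex.
Set Implicit Arguments. Unset Strict Implicit. Unset Printing Implicit Defensive.
Import Order.TTheory GRing.Theory Num.Theory.
Import numFieldNormedType.Exports.
Local Open Scope classical_set_scope.
Local Open Scope ring_scope.

Section Defs.
Variable R : realType.
Local Notation C := (R[i]).
Variables (X Z : completeNormedModType C).

Definition is_linear {U V : lmodType C} (f : U -> V) : Prop :=
  forall (a : C) (x y : U), f (a *: x + y) = a *: f x + f y.

Definition lin_op_on (domA : set X) (A : X -> Z) : Prop :=
  domA 0 /\
  (forall (a : C) x y, domA x -> domA y -> domA (a *: x + y)) /\
  (forall (a : C) x y, domA x -> domA y -> A (a *: x + y) = a *: A x + A y).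

Definition graph_op (domA : set X) (A : X -> Z) : set (X * Z) :=
  [set xz | domA xz.1 /\ xz.2 = A xz.1].

Definition closed_densely_defined (domA : set X) (A : X -> Z) : Prop :=
  lin_op_on domA A /\ closed (graph_op domA A) /\ closure domA = setT.

Definition is_resolvent (E : X -> Z) (domA : set X) (A : X -> Z)
    (lam : C) (Rl : Z -> X) : Prop :=
  is_linear Rl /\ continuous Rl /\
  (forall z, domA (Rl z) /\ lam *: E (Rl z) - A (Rl z) = z) /\
  (forall x, domA x -> Rl (lam *: E x - A x) = x).

Definition resolvent_set (E : X -> Z) (domA : set X) (A : X -> Z) : set C :=
  [set lam | exists Rl, is_resolvent E domA A lam Rl].

(* growth condition: C_{Re > omega} ⊆ rho(E,A) and
   ||(lam E - A)^{-1}|| <= K |lam|^(n-1) on C_{Re > omega}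
   (operator-norm bound written out pointwise) *)
Definition resolvent_growth (E : X -> Z) (domA : set X) (A : X -> Z) (n : nat)
  : Prop :=
  exists (omega : R) (K : R), 0 < K /\
    forall lam : C, omega < complex.Re lam ->
      exists Rl, is_resolvent E domA A lam Rl /\
        forall z, `|Rl z| <= (K%:C)%C * `|lam| ^ (n%:Z - 1) * `|z|.

Definition resolvent_index (E : X -> Z) (domA : set X) (A : X -> Z) (n : nat)
  : Prop :=
  resolvent_growth E domA A n /\
  forall m, resolvent_growth E domA A m -> (n <= m)%N.

Definition boundedly_invertible_between (T : X -> Z) (Xs : set X) (Zs : set Z)
  : Prop :=
  T @` Xs `<=` Zs /\
  exists S : Z -> X,
    (forall z, Zs z -> Xs (S z) /\ T (S z) = z) /\
    (forall x, Xs x -> S (T x) = x) /\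
    exists c : R, forall z, Zs z -> `|S z| <= (c%:C)%C * `|z|.

End Defs.

From HB Require Import structures.
From mathcomp Require Import all_boot all_order all_algebra.
From mathcomp Require Import all_classical all_reals all_analysis.
From mathcomp Require Import complex.
Import Order.TTheory GRing.Theory Num.Theory.
Import numFieldNormedType.Exports.
Local Open Scope classical_set_scope.
Local Open Scope ring_scope.
From mathcomp Require Import lra ring.

(* Write RE := R_r(mu) = R(mu) E and q := p - 1. The subspace X_ran is closed,
   and so is E(X_ran); the Baire category theorem, run inside the closed set
   E(X_ran), gives the open mapping theorem for E : X_ran -> E(X_ran), i.e.
   preimages in X_ran of norm at most c |w|. They are unique because E x = 0
   forces RE^p x = 0. It remains to see that E(X_ran) = Z_ran. As
   E RE^p = R_l(mu)^p E, continuity gives one inclusion. For the other,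
   R_l(mu)^p u = E (RE^q R(mu) u), and RE^q R(mu) u lies in X_ran: for real
   lambda, the resolvent identity
     R(mu) E R(lambda) = (R(mu) - R(lambda)) / (lambda - mu)
   and the growth bound |R(lambda)| <= K lambda^(q-1) give
     RE^p (lambda R(lambda) u) = RE^q R(mu) u + O(1 / lambda). *)

Section RealNorm.
Context {R : realType}.
Local Notation C := R[i].

(* Norms on normed spaces over [R[i]] are complex numbers with zero imaginary
   part; [rnorm] is their real part, so that [lra] can reason about them. *)
Definition rnorm {V : normedZmodType C} (x : V) : R := complex.Re `|x|.

Lemma rnormE {V : normedZmodType C} (x : V) : `|x| = (rnorm x)%:C%C.
Proof. by rewrite /rnorm RRe_real // normr_real. Qed.

Lemma rnorm_ge0 {V : normedZmodType C} (x : V) : 0 <= rnorm x.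
Proof. by rewrite -ler0c -rnormE. Qed.

Lemma ler_rnormD {V : normedZmodType C} (x y : V) :
  rnorm (x + y) <= rnorm x + rnorm y.
Proof. by have := ler_normD x y; rewrite !rnormE -rmorphD lecR. Qed.

Lemma rnormN {V : normedZmodType C} (x : V) : rnorm (- x) = rnorm x.
Proof. by rewrite /rnorm normrN. Qed.

Lemma rdistC {V : normedZmodType C} (x y : V) : rnorm (x - y) = rnorm (y - x).
Proof. by rewrite /rnorm distrC. Qed.

Lemma rnorm0 {V : normedZmodType C} : rnorm (0 : V) = 0.
Proof. by rewrite /rnorm normr0. Qed.

Lemma rnorm_eq0 {V : normedZmodType C} (x : V) : (rnorm x == 0) = (x == 0).
Proof.
rewrite -[x == 0]normr_eq0 rnormE -(rmorph0 (real_complex R)).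
by rewrite (inj_eq (@complexI R)).
Qed.

Lemma rnormZ {V : normedModType C} (a : C) (x : V) :
  rnorm (a *: x) = rnorm a * rnorm x.
Proof. by apply: complexI; rewrite rmorphM /= -!rnormE normrZ. Qed.

Lemma rnormM (a b : C) : rnorm (a * b) = rnorm a * rnorm b.
Proof. by apply: complexI; rewrite rmorphM /= -!rnormE normrM. Qed.

Lemma rnormV (a : C) : rnorm a^-1 = (rnorm a)^-1.
Proof. by apply: complexI; rewrite fmorphV /= -!rnormE normfV. Qed.

Lemma rnorm_real (r : R) : rnorm (r%:C%C : C) = `|r|.
Proof. by rewrite /rnorm normc_def /= expr0n /= addr0 sqrtr_sqr. Qed.

Lemma rnormZ_ge0 {V : normedModType C} (r : R) (x : V) :
  0 <= r -> rnorm (r%:C%C *: x) = r * rnorm x.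
Proof. by move=> r0; rewrite rnormZ rnorm_real ger0_norm. Qed.

Lemma rnorm_ltc {V : normedZmodType C} (x : V) (e : R) :
  (`|x| < e%:C%C) = (rnorm x < e).
Proof. by rewrite rnormE ltcR. Qed.

Lemma ltc0R (r : R) : (0 < r%:C%C :> C) = (0 < r).
Proof. by rewrite ltcE /= eqxx. Qed.

Lemma posC_real (e : C) : 0 < e -> e = (complex.Re e)%:C%C /\ 0 < complex.Re e.
Proof. by move=> e0; rewrite RRe_real ?gtr0_real // -ltc0R RRe_real ?gtr0_real. Qed.

End RealNorm.

Section MetricFacts.
Context {R : realType}.
Local Notation C := R[i].
Context {V : normedModType C}.
Implicit Types (A : set V) (x y a : V).

Lemma closureP A x :
  closure A x <-> forall e : R, 0 < e -> exists2 y, A y & rnorm (x - y) < e.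
Proof.
split=> [clA e e0|Aclose B /nbhs_ballP[e /posC_real[-> e0] sB]].
  have /clA[y [Ay]] : nbhs x (ball x e%:C%C) by apply: nbhsx_ballx; rewrite ltc0R.
  by rewrite -ball_normE /= rnorm_ltc; exists y.
have [y Ay xy] := Aclose _ e0; exists y; split=> //.
by apply: sB; rewrite -ball_normE /= rnorm_ltc.
Qed.

Lemma closed_rball a (r : R) : closed [set y | rnorm (y - a) <= r].
Proof.
move=> y /closureP ycl; apply/ler_addgt0Pr => e /ycl[z /= za yz].
have := ler_rnormD (y - z) (z - a); rewrite addrA subrK; lra.
Qed.

Lemma cvg_rdist_le {u : nat -> V} {l a : V} {r : R} : u @ \oo --> l ->
  (\forall k \near \oo, rnorm (u k - a) <= r) -> rnorm (l - a) <= r.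
Proof. by move=> ul; have := closed_cvg _ (closed_rball a r) _ _ ul; apply. Qed.

Lemma not_closure_rball A x : ~ closure A x ->
  exists2 s : R, 0 < s & forall y, rnorm (x - y) < s -> ~ closure A y.
Proof.
move=> nAx; have /nbhs_ballP[s /posC_real[-> s0] sA] : nbhs x (~` closure A).
  by apply: open_nbhs_nbhs; split=> //; exact/closed_openC/closed_closure.
by exists (complex.Re s) => // y xy; apply: sA; rewrite -ball_normE /= rnorm_ltc.
Qed.

Lemma image_closure_sub {W : normedModType C} {f : V -> W} {A : set V} :
  continuous f -> f @` closure A `<=` closure (f @` A).
Proof.
move=> cf _ [x Ax <-] B /(cf x) /Ax[y [Ay By]].
by exists (f y); split=> //; exists y.
Qed.

End MetricFacts.

Lemma iterate_choice {T : Type} (P : nat -> T -> Prop) (Q : nat -> T -> T -> Prop)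
    (x0 : T) :
  P 0%N x0 -> (forall k x, P k x -> exists2 y, P k.+1 y & Q k x y) ->
  exists u : nat -> T, u 0%N = x0 /\ forall k, P k (u k) /\ Q k (u k) (u k.+1).
Proof.
move=> Px0 step.
have step' (kx : nat * T) : exists y, P kx.1 kx.2 -> P kx.1.+1 y /\ Q kx.1 kx.2 y.
  case: kx => k x; have [/step[y Py Qy]|nPx] := pselect (P k x); first by exists y.
  by exists x.
have [next hnext] := choice step'.
pose fix u k := if k is j.+1 then next (j, u j) else x0.
have Pu k : P k (u k) by elim: k => // k /(hnext (k, u k))[].
by exists u; split=> // k; split=> //; have [] := hnext (k, u k) (Pu k).
Qed.

Section Sequences.
Context {R : realType}.
Local Notation C := R[i].

Lemma exists_halfpow_lt (c e : R) : 0 < e -> exists k : nat, c * 2^-1 ^+ k < e.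
Proof.
move=> e0; have half1 : `|2^-1 : R| < 1.
  by rewrite ger0_norm ?invr_ge0 // invf_lt1 ?ltr1n.
have /cvgr_lt/(_ e e0)[k _ hk] := cvg_geometric c half1.
by exists k; apply: hk => /=.
Qed.

Lemma cvg_rdist_step {V : completeNormedModType C} (u : nat -> V) (rho : nat -> R) :
  (forall k, 0 <= rho k) ->
  (forall k, rnorm (u k.+1 - u k) + rho k.+1 <= rho k) ->
  (forall e, 0 < e -> exists k, rho k < e) ->
  exists2 l, u @ \oo --> l & forall k, rnorm (l - u k) <= rho k.
Proof.
move=> rho0 step small.
have tail k m : (k <= m)%N -> rnorm (u m - u k) <= rho k.
  move=> /subnK <-.
  suff : rnorm (u (m - k + k)%N - u k) + rho (m - k + k)%N <= rho k.
    by have := rho0 (m - k + k)%N; lra.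
  elim: (m - k)%N => [|n IH]; first by rewrite add0n subrr rnorm0 add0r.
  have := ler_rnormD (u (n + k).+1 - u (n + k)) (u (n + k) - u k).
  by rewrite addrA subrK addSn; have := step (n + k)%N; lra.
have cu : cvg (u @ \oo).
  apply: cauchy_cvg; apply: cauchy_exP => e /posC_real[-> e0].
  have [k rk] := small _ e0; exists (u k); exists k => // m /= km.
  by rewrite -ball_normE /= rnorm_ltc rdistC; have := tail k m km; lra.
exists (lim (u @ \oo)) => [|k]; first exact: cu.
by apply: (cvg_rdist_le cu); exists k => // m /=; exact: tail.
Qed.

End Sequences.

Section BaireClosed.
Context {R : realType}.
Local Notation C := R[i].
Context {Z : completeNormedModType C}.
Variables (W : set Z) (S : nat -> set Z).
Hypothesis closedW : closed W.

Definition pieces_nowhere_dense :=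
  forall n w0 (r : R), W w0 -> 0 < r ->
    exists2 w, W w & rnorm (w - w0) < r /\ ~ closure (S n) w.

(* Balls are encoded as pairs (centre, radius). *)
Definition shrinking_ball (n : nat) (p q : Z * R) :=
  [/\ rnorm (q.1 - p.1) < p.2 / 4, q.2 <= p.2 / 2 &
      forall u, rnorm (u - q.1) <= q.2 / 2 -> ~ closure (S n) u].

Lemma exists_shrinking_ball n p : pieces_nowhere_dense -> W p.1 -> 0 < p.2 ->
  exists2 q, W q.1 /\ 0 < q.2 & shrinking_ball n p q.
Proof.
move=> nowhere Wp p0.
have p4 : 0 < p.2 / 4 by lra.
have [w Ww [wp /not_closure_rball[s s0 sS]]] := nowhere n _ _ Wp p4.
have s'0 : 0 < Num.min (p.2 / 2) s by rewrite lt_min s0 andbT; lra.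
exists (w, Num.min (p.2 / 2) s) => //; split=> //=; first by rewrite ge_min lexx.
have s's : Num.min (p.2 / 2) s <= s by rewrite ge_min lexx orbT.
by move=> u uw; apply: sS; rewrite rdistC; lra.
Qed.

Theorem Baire_closed : W !=set0 -> W `<=` \bigcup_n S n ->
  exists n w0 (r : R),
    [/\ W w0, 0 < r & forall w, W w -> rnorm (w - w0) < r -> closure (S n) w].
Proof.
move=> [w0 Ww0] cover; apply: contrapT => not_dense.
have nowhere : pieces_nowhere_dense.
  move=> n w1 r Ww1 r0; apply: contrapT => dense; apply: not_dense.
  exists n, w1, r; split=> // w Ww wr; apply: contrapT => ncl; apply: dense.
  by exists w.
have [b [b0 hb]] : exists b : nat -> Z * R, b 0%N = (w0, 1) /\
    forall k, (W (b k).1 /\ 0 < (b k).2) /\ shrinking_ball k (b k) (b k.+1).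
  apply: (iterate_choice (fun _ p => W p.1 /\ 0 < p.2) shrinking_ball).
    by split=> //; exact: ltr01.
  by move=> k p [Wp p0]; exact: exists_shrinking_ball.
have rb k : (b k).2 <= 2^-1 ^+ k.
  elim: k => [|k IH]; first by rewrite b0 expr0.
  by have [_ [_ h _]] := hb k; rewrite exprS; lra.
have [l bl lb] : exists2 l, (fun k => (b k).1) @ \oo --> l &
    forall k, rnorm (l - (b k).1) <= (b k).2 / 2.
  apply: cvg_rdist_step => [k|k|e e0].
  - by have [[_ b0'] _] := hb k; lra.
  - by have [_ [h1 h2 _]] := hb k; lra.
  - by have [k hk] := exists_halfpow_lt 1 e e0; exists k; have := rb k; lra.
have Wl : W l.
  have := closed_cvg _ closedW _ _ bl; apply.
  by apply: nearW => k; have [[]] := hb k.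
have [n _ Snl] := cover l Wl.
have [_ [_ _ ncl]] := hb n.
by apply: (ncl l (lb n.+1)); exact: subset_closure.
Qed.

End BaireClosed.

Section Linear.
Context {R : realType}.
Local Notation C := R[i].

Section IsLinear.
Context {U V : lmodType C} {f : U -> V}.
Hypothesis flin : is_linear f.

Lemma is_linear0 : f 0 = 0.
Proof. by have := flin (-1) 0 0; rewrite scaler0 addr0 scaleN1r addNr. Qed.

Lemma is_linearD x y : f (x + y) = f x + f y.
Proof. by have := flin 1 x y; rewrite !scale1r. Qed.

Lemma is_linearZ (a : C) x : f (a *: x) = a *: f x.
Proof. by have := flin a x 0; rewrite !addr0 is_linear0 addr0. Qed.

Lemma is_linearB x y : f (x - y) = f x - f y.
Proof. by have := flin (-1) y x; rewrite !scaleN1r addrC [- f y + _]addrC. Qed.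

End IsLinear.

Lemma linear_is_linear {U V : lmodType C} (f : {linear U -> V}) : is_linear f.
Proof. by move=> a x y; rewrite linearP. Qed.

Lemma is_linear_comp {U V W : lmodType C} (f : V -> W) (g : U -> V) :
  is_linear f -> is_linear g -> is_linear (f \o g).
Proof. by move=> flin glin a x y /=; rewrite glin flin. Qed.

Lemma is_linear_iter {U : lmodType C} (f : U -> U) k :
  is_linear f -> is_linear (iter k f).
Proof. by move=> flin; elim: k => [|k IH] a x y //=; rewrite IH flin. Qed.

Definition linear_subspace {U : lmodType C} (S : set U) :=
  S 0 /\ forall (a : C) x y, S x -> S y -> S (a *: x + y).

Section Subspace.
Context {U : lmodType C} {S : set U}.
Hypothesis subS : linear_subspace S.

Lemma subspace0 : S 0.
Proof. by case: subS. Qed.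

Lemma subspaceZ (a : C) x : S x -> S (a *: x).
Proof.
by move=> Sx; rewrite -[_ *: _]addr0; apply: subS.2 => //; exact: subspace0.
Qed.

Lemma subspaceD x y : S x -> S y -> S (x + y).
Proof. by move=> Sx Sy; rewrite -[x]scale1r; apply: subS.2. Qed.

Lemma subspaceB x y : S x -> S y -> S (x - y).
Proof. by move=> Sx Sy; rewrite addrC -scaleN1r; apply: subS.2. Qed.

End Subspace.

Lemma range_linear_subspace {U V : lmodType C} (f : U -> V) :
  is_linear f -> linear_subspace (range f).
Proof.
move=> flin; split; first by exists 0 => //; exact: is_linear0 flin.
by move=> a _ _ [x _ <-] [y _ <-]; exists (a *: x + y).
Qed.

Lemma closure_linear_subspace {U : normedModType C} (S : set U) :
  linear_subspace S -> linear_subspace (closure S).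
Proof.
move=> subS; split; first exact/subset_closure/subS.1.
move=> a x y /closureP Sx /closureP Sy; apply/closureP => e e0.
have a1 : 0 < rnorm a + 1 by have := rnorm_ge0 a; lra.
have [x' Sx' xx'] := Sx (e / 2 / (rnorm a + 1)) (ltac:(by rewrite !divr_gt0)).
have [y' Sy' yy'] := Sy (e / 2) (ltac:(lra)).
exists (a *: x' + y'); first exact: subS.2.
rewrite opprD addrACA -scalerBr.
have := ler_rnormD (a *: (x - x')) (y - y'); rewrite rnormZ.
have : rnorm a * rnorm (x - x') <= (rnorm a + 1) * rnorm (x - x').
  by apply: ler_wpM2r; [exact: rnorm_ge0 | rewrite lerDl].
by move: xx'; rewrite ltr_pdivlMr // mulrC; lra.
Qed.

End Linear.

Section OpenMapping.
Context {R : realType}.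
Local Notation C := R[i].
Context {X Z : completeNormedModType C}.
Variables (T : {linear X -> Z}) (V : set X).
Hypotheses (contT : continuous T) (closedV : closed V) (subV : linear_subspace V).
Hypothesis closedTV : closed (T @` V).

Definition approx_bounded (M : R) := forall w (rho eps : R),
  (T @` V) w -> rnorm w < rho -> 0 < eps ->
  exists2 v, V v & rnorm v <= M * rho /\ rnorm (w - T v) < eps.

Lemma image_ball_dense_somewhere : exists n w0 (r : R),
  [/\ (T @` V) w0, 0 < r & forall w, (T @` V) w -> rnorm (w - w0) < r ->
    closure (T @` [set v | V v /\ rnorm v <= n%:R]) w].
Proof.
apply: Baire_closed => //; first by exists (T 0), 0 => //; exact: subspace0 subV.
move=> _ [v Vv <-]; exists (Num.truncn (rnorm v)).+1 => //.
by exists v => //; split=> //; exact/ltW/truncnS_gt.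
Qed.

Lemma approx_near_origin : exists (n : nat) (r : R), 0 < r /\
  forall w, (T @` V) w -> rnorm w < r -> forall eps : R, 0 < eps ->
    exists2 v, V v & rnorm v <= 2 * n%:R /\ rnorm (w - T v) < eps.
Proof.
have [n [_ [r [[u0 Vu0 <-] r0 dense]]]] := image_ball_dense_somewhere.
exists n, r; split=> // _ [v0 Vv0 <-] v0r eps eps0.
have approx w : (T @` V) w -> rnorm (w - T u0) < r ->
    exists2 v, V v /\ rnorm v <= n%:R & rnorm (w - T v) < eps / 2.
  move=> TVw /(dense _ TVw)/closureP/(_ (eps / 2) (ltac:(lra)))[_ [v Vv <-] wv].
  by exists v.
have TVp : (T @` V) (T u0 + T v0).
  by exists (u0 + v0); [apply: (subspaceD subV) | rewrite linearD].
have [v1 [Vv1 v1n] v1w] := approx _ TVp (ltac:(by rewrite addrC addKr)).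
have [v2 [Vv2 v2n] v2w] :=
  approx (T u0) (ex_intro2 _ _ u0 Vu0 erefl) (ltac:(by rewrite subrr rnorm0)).
exists (v1 - v2); first exact: (subspaceB subV).
split; first by have := ler_rnormD v1 (- v2); rewrite rnormN; lra.
have -> : T v0 - T (v1 - v2) = (T u0 + T v0 - T v1) - (T u0 - T v2).
  by rewrite linearB [T u0 + T v0]addrC addrAC addrKA opprK opprB addrA addrAC.
by have := ler_rnormD (T u0 + T v0 - T v1) (- (T u0 - T v2)); rewrite rnormN; lra.
Qed.

Lemma exists_approx_bounded : exists2 M : R, 0 <= M & approx_bounded M.
Proof.
have [n [r [r0 near0]]] := approx_near_origin.
exists (2 * n%:R / r); first by rewrite divr_ge0 // ltW.
move=> _ rho eps [v0 Vv0 <-] v0rho eps0.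
have rho0 : 0 < rho by have := rnorm_ge0 (T v0); lra.
pose t := r / rho; have t0 : 0 < t by rewrite divr_gt0.
have ti0 : 0 < t^-1 by rewrite invr_gt0.
have [|||v Vv [vn wv]] := near0 (t%:C%C *: T v0) _ _ (t * eps).
- by exists (t%:C%C *: v0); [apply: (subspaceZ subV) | rewrite linearZ].
- by rewrite (rnormZ_ge0 _ _ (ltW t0)) /t mulrAC ltr_pdivrMr // ltr_pM2l.
- exact: mulr_gt0.
exists (t^-1%:C%C *: v); first by apply: (subspaceZ subV).
split.
  have -> : 2 * n%:R / r * rho = t^-1 * (2 * n%:R) by rewrite /t invf_div; ring.
  by rewrite (rnormZ_ge0 _ _ (ltW ti0)) ler_pM2l.
have -> : T v0 - T (t^-1%:C%C *: v) = t^-1%:C%C *: (t%:C%C *: T v0 - T v).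
  by rewrite linearZ scalerBr scalerA -rmorphM mulVf ?gt_eqF // rmorph1 scale1r.
by rewrite (rnormZ_ge0 _ _ (ltW ti0)) -(ltr_pM2l t0) mulrA mulfV ?gt_eqF // mul1r.
Qed.

Lemma solution_of_approx {M : R} : 0 <= M -> approx_bounded M ->
  forall {w} {rho : R}, (T @` V) w -> rnorm w < rho ->
  exists2 x, V x & T x = w /\ rnorm x <= 2 * M * rho.
Proof.
move=> M0 approxM w rho TVw wrho.
have rho0 : 0 < rho by have := rnorm_ge0 w; lra.
pose h k := rho * 2^-1 ^+ k.
have h0 k : 0 < h k by rewrite mulr_gt0 // exprn_gt0 // invr_gt0.
have h_nonincr k m : (k <= m)%N -> h m <= h k.
  move=> km; rewrite ler_pM2l //.
  by apply: ler_wiXn2l km; rewrite ?invr_ge0 ?invf_le1 ?ler1n.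
have [x [x0 hx]] : exists x : nat -> X, x 0%N = 0 /\ forall k,
    (V (x k) /\ rnorm (w - T (x k)) < h k) /\ rnorm (x k.+1 - x k) <= M * h k.
  apply: (iterate_choice (fun k y => V y /\ rnorm (w - T y) < h k)
                         (fun k y y' => rnorm (y' - y) <= M * h k)).
    by split; [exact: subspace0 subV | rewrite linear0 subr0 /h expr0 mulr1].
  move=> k y [Vy wy].
  have TVwy : (T @` V) (w - T y).
    case: TVw => v Vv <-; exists (v - y); first exact: (subspaceB subV).
    by rewrite linearB.
  have [v Vv [vb wv]] := approxM _ _ _ TVwy wy (h0 k.+1).
  exists (y + v); last by rewrite addrC addKr.
  by split; [apply: (subspaceD subV) | rewrite linearD opprD addrA].
have [l xl lx] : exists2 l, x @ \oo --> l &
    forall k, rnorm (l - x k) <= 2 * (M * h k).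
  apply: cvg_rdist_step => [k|k|e e0].
  - by apply: mulr_ge0 => //; apply: mulr_ge0 => //; exact: ltW.
  - have hS : h k.+1 = h k / 2 by rewrite /h exprS mulrCA mulrC.
    by rewrite hS; have := (hx k).2; lra.
  - have [k hk] := exists_halfpow_lt (2 * M * rho) e e0.
    by exists k; rewrite /h !mulrA.
exists l.
  have := closed_cvg _ closedV _ _ xl; apply.
  by apply: nearW => k; have [[]] := hx k.
split; last by have := lx 0%N; rewrite x0 subr0 /h expr0 mulr1 mulrA.
have Txl : (T \o x) @ \oo --> T l.
  by apply: continuous_cvg; [exact: contT | exact: xl].
apply/eqP; rewrite eq_sym -subr_eq0 -rnorm_eq0 eq_le rnorm_ge0 andbT.
apply/ler_addgt0Pr => e e0; rewrite add0r.
have [k hk] := exists_halfpow_lt rho e e0.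
suff : rnorm (T l - w) <= h k by rewrite rdistC -/(h k) in hk *; lra.
apply: (cvg_rdist_le Txl); exists k => // m /= km.
by rewrite rdistC; have := (hx m).1.2; have := h_nonincr k m km; lra.
Qed.

Theorem open_mapping_linear_subspace : exists c : R, forall w, (T @` V) w ->
  exists2 x, V x & T x = w /\ rnorm x <= c * rnorm w.
Proof.
have [M M0 approxM] := exists_approx_bounded.
exists (4 * M) => w TVw; have [->|w0] := eqVneq w 0.
  exists 0; first exact: subspace0 subV.
  by split; [exact: linear0 | rewrite !rnorm0 mulr0].
have wpos : 0 < rnorm w by rewrite lt_neqAle rnorm_ge0 andbT eq_sym rnorm_eq0.
have w2w : rnorm w < 2 * rnorm w by lra.
have [x Vx [Txw xb]] := solution_of_approx M0 approxM TVw w2w.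
exists x => //; split=> //.
by rewrite (_ : 4 * M * rnorm w = 2 * M * (2 * rnorm w)) //; ring.
Qed.

End OpenMapping.

Lemma mulr_exprz_pred {F : fieldType} (x : F) (n : nat) :
  x != 0 -> x * x ^ (n%:Z - 1) = x ^+ n.
Proof.
case: n => [|n] x0; first by rewrite sub0r exprN1 mulfV // expr0.
by rewrite -addn1 PoszD addrK exprD expr1 mulrC.
Qed.

Section ResolventApproximation.
Context {R : realType}.
Local Notation C := R[i].
Context {X Z : completeNormedModType C}.
Context {E : {linear X -> Z}} {domA : set X} {A : X -> Z}.

Lemma resolvent_linear {lam : C} {Rl : Z -> X} :
  is_resolvent E domA A lam Rl -> is_linear Rl.
Proof. by case. Qed.

Lemma resolvent_identity {lam mu : C} {G Rm : Z -> X} :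
  is_resolvent E domA A lam G -> is_resolvent E domA A mu Rm -> lam != mu ->
  forall y, Rm (E (G y)) = (lam - mu)^-1 *: (Rm y - G y).
Proof.
move=> [_ [_ [GR _]]] [Rmlin [_ [_ RmL]]] lam_mu y.
have [domx AEx] := GR y; set x := G y in domx AEx *.
have : mu *: E x - A x = (mu - lam) *: E x + y by rewrite -AEx scalerBl addrA subrK.
move/(congr1 Rm); rewrite RmL // (is_linearD Rmlin) (is_linearZ Rmlin) => RmEx.
rewrite [in RHS]RmEx opprD addrCA subrr addr0 -scaleNr opprB scalerA.
by rewrite mulVf ?scale1r // subr_eq0.
Qed.

Lemma growth_bound_real {K l : R} {n : nat} {x : X} {y : Z} : 0 < l ->
  `|x| <= K%:C%C * `|l%:C%C| ^ (n%:Z - 1) * `|y| ->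
  l * rnorm x <= K * l ^+ n * rnorm y.
Proof.
move=> l0; rewrite !rnormE rnorm_real (ger0_norm (ltW l0)).
have lC0 : 0 < l%:C%C :> C by rewrite ltc0R.
move=> /(ler_wpM2l (ltW lC0)).
rewrite mulrA mulrCA mulr_exprz_pred ?lt0r_neq0 //.
by rewrite -(rmorphXn (real_complex R)) -!rmorphM lecR.
Qed.

End ResolventApproximation.

Section ResolventPowers.
Context {R : realType}.
Local Notation C := R[i].
Context {X Z : completeNormedModType C}.
Context {E : {linear X -> Z}} {domA : set X} {A : X -> Z} {mu : C} {Rm : Z -> X}.
Hypothesis resRm : is_resolvent E domA A mu Rm.
Variables (q : nat) (z : Z).

Local Notation RE := (Rm \o E).
Local Notation d j := (iter j RE (Rm z)).

Lemma is_linear_iter_RE j : is_linear (iter j RE).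
Proof.
apply/is_linear_iter/is_linear_comp; first exact: resolvent_linear resRm.
exact: linear_is_linear.
Qed.

Section FixedSpectralParameter.
Variables (K l : R) (G : Z -> X).
Hypotheses (l_big : 2 * rnorm mu + 1 <= l) (resG : is_resolvent E domA A l%:C%C G).
Hypothesis G_bound : forall y, l * rnorm (G y) <= K * l ^+ q * rnorm y.

Let beta := (l%:C%C - mu)^-1.
Local Notation c j := (iter j RE (G z)).

(* Bounds [l ^+ j.+1 * rnorm (c j) / l ^+ q], where [c j.+1 = beta *: (d j - c j)]
   and [l * rnorm beta <= 2]. *)
Fixpoint growth_const (j : nat) : R :=
  if j is j'.+1 then 2 * (rnorm (d j') + growth_const j') else K * rnorm z.

Lemma l_ge1 : 1 <= l.
Proof. by apply: le_trans l_big; rewrite lerDr mulr_ge0 ?rnorm_ge0. Qed.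

Lemma l_gt0 : 0 < l.
Proof. exact: lt_le_trans ltr01 l_ge1. Qed.

Lemma l_large : 2 * rnorm mu < l.
Proof. by apply: lt_le_trans l_big; rewrite ltrDl. Qed.

Lemma l_neq_mu : l%:C%C != mu.
Proof.
apply/eqP => l_mu; have := l_large; have := l_gt0.
by rewrite -l_mu rnorm_real (ger0_norm (ltW l_gt0)); lra.
Qed.

Lemma scaled_beta_le2 : l * rnorm beta <= 2.
Proof.
have := ler_rnormD (l%:C%C - mu) mu.
rewrite subrK rnorm_real (ger0_norm (ltW l_gt0)) => l_le.
have mu0 := rnorm_ge0 mu; have l_mu := l_large.
have lmu0 : 0 < rnorm (l%:C%C - mu) by lra.
by rewrite /beta rnormV ler_pdivrMr //; lra.
Qed.

Lemma iter_RE_resolvent_succ j : c j.+1 = beta *: (d j - c j).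
Proof.
rewrite iterSr; change (iter j RE (Rm (E (G z))) = beta *: (d j - c j)).
rewrite (resolvent_identity resG resRm l_neq_mu).
by rewrite (is_linearZ (is_linear_iter_RE j)) (is_linearB (is_linear_iter_RE j)).
Qed.

Lemma iter_RE_resolvent_bound j : (j <= q)%N ->
  l ^+ j.+1 * rnorm (c j) <= growth_const j * l ^+ q.
Proof.
elim: j => [_|j IH jq]; first by rewrite expr1 mulrAC G_bound.
have a0 : 0 <= l ^+ j.+1 by exact/exprn_ge0/ltW/l_gt0.
have ajq : l ^+ j.+1 <= l ^+ q := ler_weXn2l l_ge1 jq.
have dc : rnorm (d j - c j) <= rnorm (d j) + rnorm (c j).
  by have := ler_rnormD (d j) (- c j); rewrite rnormN.
have ad : l ^+ j.+1 * rnorm (d j) <= l ^+ q * rnorm (d j).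
  by rewrite ler_wpM2r ?rnorm_ge0.
have adc : l ^+ j.+1 * rnorm (d j - c j) <=
    l ^+ q * rnorm (d j) + growth_const j * l ^+ q.
  by have := ler_wpM2l a0 dc; have := IH (ltnW jq); lra.
rewrite iter_RE_resolvent_succ rnormZ.
have -> : l ^+ j.+2 * (rnorm beta * rnorm (d j - c j)) =
    (l * rnorm beta) * (l ^+ j.+1 * rnorm (d j - c j)) by rewrite exprS; ring.
apply: le_trans (ler_wpM2r _ scaled_beta_le2) _; first by rewrite mulr_ge0 ?rnorm_ge0.
by rewrite /= -/(growth_const j); lra.
Qed.

Lemma resolvent_approx_error :
  l * rnorm (iter q.+1 RE (l%:C%C *: G z) - d q) <=
    growth_const q + 2 * rnorm mu * (rnorm (d q) + growth_const q).
Proof.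
have lcq : l * rnorm (c q) <= growth_const q.
  have := iter_RE_resolvent_bound q (leqnn q).
  by rewrite exprSr -mulrA [growth_const q * _]mulrC ler_pM2l // exprn_gt0 // l_gt0.
have cq : rnorm (c q) <= growth_const q.
  by apply: le_trans lcq; rewrite ler_peMl ?rnorm_ge0 ?l_ge1.
have l_beta : l%:C%C * beta = 1 + mu * beta.
  by rewrite -{1}(subrK mu l%:C%C) mulrDl mulfV // subr_eq0 l_neq_mu.
rewrite (is_linearZ (is_linear_iter_RE q.+1)).
rewrite iter_RE_resolvent_succ scalerA l_beta scalerDl scale1r.
rewrite addrAC [d q - c q - d q]addrAC subrr add0r.
have mu0 := rnorm_ge0 mu; have beta0 := rnorm_ge0 beta.
have dc : rnorm (d q - c q) <= rnorm (d q) + rnorm (c q).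
  by have := ler_rnormD (d q) (- c q); rewrite rnormN.
have split_err : l * rnorm (- c q + (mu * beta) *: (d q - c q)) <=
    l * rnorm (c q) + rnorm mu * (l * rnorm beta) * rnorm (d q - c q).
  have := ler_rnormD (- c q) ((mu * beta) *: (d q - c q)).
  rewrite rnormN rnormZ rnormM => /(ler_wpM2l (ltW l_gt0)).
  by rewrite mulrDr !mulrA [l * rnorm mu]mulrC.
have beta_err : rnorm mu * (l * rnorm beta) * rnorm (d q - c q) <=
    rnorm mu * 2 * (rnorm (d q) + rnorm (c q)).
  rewrite -mulrA -[rnorm mu * 2 * _]mulrA; apply: (ler_wpM2l mu0).
  apply: ler_pM dc; [exact: mulr_ge0 (ltW l_gt0) beta0 | exact: rnorm_ge0 |].
  exact: scaled_beta_le2.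
have c_err : rnorm mu * 2 * (rnorm (d q) + rnorm (c q)) <=
    rnorm mu * 2 * (rnorm (d q) + growth_const q).
  by apply: ler_wpM2l; [rewrite mulr_ge0 | rewrite lerD2l].
lra.
Qed.

End FixedSpectralParameter.

Lemma iter_resolvent_in_closure_range :
  resolvent_growth E domA A q -> closure (range (iter q.+1 RE)) (d q).
Proof.
move=> [om [K [_ growth]]]; apply/closureP => e e0.
(* The witness [iter q.+1 RE (l *: G z)] is within [B / l] of [d q]. *)
set B := growth_const K q + 2 * rnorm mu * (rnorm (d q) + growth_const K q).
pose l := Num.max (om + 1) (Num.max (2 * rnorm mu + 1) (B / e + 1)).
have [l_om l_mu l_B] : [/\ om + 1 <= l, 2 * rnorm mu + 1 <= l & B / e + 1 <= l].
  by rewrite /l !le_max !lexx !orbT.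
have l0 : 0 < l by have := rnorm_ge0 mu; lra.
have [|G [resG G_bound]] := growth l%:C%C; first by rewrite /=; lra.
have := resolvent_approx_error K l G l_mu resG.
move=> /(_ (fun y => growth_bound_real l0 (G_bound y))); rewrite -/B => err.
exists (iter q.+1 RE (l%:C%C *: G z)); first by exists (l%:C%C *: G z).
have Be : B < l * e by rewrite -ltr_pdivrMr //; lra.
by rewrite rdistC -(ltr_pM2l l0); lra.
Qed.

End ResolventPowers.

Lemma iter_comp_map {T U : Type} (f : U -> T) (g : T -> U) k x :
  g (iter k (f \o g) x) = iter k (g \o f) (g x).
Proof. by elim: k => //= k ->. Qed.

Section BoundedInverse.
Context {R : realType}.
Local Notation C := R[i].
Context {X Z : completeNormedModType C}.

Lemma image_closure_range_iter (f : Z -> X) (g : X -> Z) k : continuous g ->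
  g @` closure (range (iter k (f \o g))) `<=` closure (range (iter k (g \o f))).
Proof.
move=> cg y /(image_closure_sub cg); apply: closureS => _ [_ [x _ <-] <-].
by exists (g x) => //; rewrite (iter_comp_map f g).
Qed.

Lemma linear_injective_on (T : {linear X -> Z}) (V : set X) : linear_subspace V ->
  (forall x, V x -> T x = 0 -> x = 0) ->
  forall x y, V x -> V y -> T x = T y -> x = y.
Proof.
move=> subV T0 x y Vx Vy Txy; apply/eqP; rewrite -subr_eq0; apply/eqP/T0.
  exact: (subspaceB subV).
by rewrite linearB Txy subrr.
Qed.

Lemma boundedly_invertible_of_bounded_preimages (T : X -> Z)
    (Xs : set X) (Zs : set Z) (c : R) :
  T @` Xs = Zs -> (forall x y, Xs x -> Xs y -> T x = T y -> x = y) ->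
  (forall w, Zs w -> exists2 x, Xs x & T x = w /\ rnorm x <= c * rnorm w) ->
  boundedly_invertible_between T Xs Zs.
Proof.
move=> TXZ Tinj preim; split; first by rewrite TXZ.
have /choice[S HS] (w : Z) :
    exists x, Zs w -> [/\ Xs x, T x = w & rnorm x <= c * rnorm w].
  have [/preim[x Xx [Txw xw]]|nZw] := pselect (Zs w); first by exists x.
  by exists 0 => /nZw.
exists S; split; first by move=> w /HS[].
split.
  move=> x Xx; have [|XS TS _] := HS (T x); first by rewrite -TXZ; exists x.
  exact: Tinj.
by exists c => w /HS[_ _]; rewrite !rnormE -rmorphM lecR.
Qed.

End BoundedInverse.

Theorem proposition3p8 (R : realType) (X Z : completeNormedModType R[i])
  (E : {linear X -> Z}) (domA : set X) (A : X -> Z) (pres : nat)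
  (mu : R[i]) (Rmu : Z -> X) :
  continuous E ->
  closed_densely_defined domA A ->
  resolvent_index E domA A pres ->
  is_resolvent E domA A mu Rmu ->
  let p := pres.+1 in
  let Xran := closure (range (iter p (Rmu \o E))) in
  let Zran := closure (range (iter p (E \o Rmu))) in
  closed (E @` Xran) ->
  Xran `&` [set x | iter p (Rmu \o E) x = 0] = [set 0] ->
  boundedly_invertible_between E Xran Zran.
Proof.
move=> contE _ [growth _] resRmu p Xran Zran closedEX ker.
have subX : linear_subspace Xran.
  apply/closure_linear_subspace/range_linear_subspace.
  exact: is_linear_iter_RE resRmu p.
have EX_Z : E @` Xran = Zran.
  apply/seteqP; split; first exact: image_closure_range_iter.
  rewrite [E @` Xran](closure_id _).1 //; apply: closureS => _ [u _ <-].
  exists (iter pres (Rmu \o E) (Rmu u)).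
    exact: iter_resolvent_in_closure_range resRmu pres u growth.
  by rewrite (iter_comp_map Rmu E) /p iterSr.
have kerE x : Xran x -> E x = 0 -> x = 0.
  move=> Xx Ex0.
  suff : (Xran `&` [set x | iter p (Rmu \o E) x = 0]) x by rewrite ker.
  split=> //; change (iter pres.+1 (Rmu \o E) x = 0).
  rewrite iterSr /= Ex0 (is_linear0 (resolvent_linear resRmu)).
  exact: is_linear0 (is_linear_iter_RE resRmu pres).
have [c preimE] :=
  open_mapping_linear_subspace E Xran contE (@closed_closure _ _) subX closedEX.
apply: (boundedly_invertible_of_bounded_preimages _ _ _ c EX_Z).
  exact: linear_injective_on.
by rewrite -EX_Z.
Qed.
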